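(* Let $\mu=(p,q,r,s)\in\mathbb{R}^4$ with $(p,q,r)\neq(0,0,0)$, and let $\alpha=\max\{|p|,|q|,|r|\}/2$. There exists a $\mu$-Markoff map $\phi\in\Phi_\mu$ such that $\Omega_\phi(2+\alpha)=\{X\in\Omega:|\phi(X)|\le 2+\alpha\}$ is finite.
   Context: Let $\Sigma$ be a countably infinite simplicial tree, properly embedded in the plane, all of whose vertices have degree $3$. A complementary region is the closure of a connected component of the complement of $\Sigma$; $\Omega$ is the set of complementary regions, $E(\Sigma)$ the set of edges. Every edge $e$ is the intersection of exactly two regions $X,Y$, and its two endpoints lie on two further regions $Z,W$ respectively; write $e\leftrightarrow(X,Y;Z,W)$. Three regions meet at each vertex. Fix a coloring $\mathcal C:\Omega\cup E(\Sigma)\to\{1,2,3\}$ such that for every $e\leftrightarrow(X,Y;Z,W)$, $\mathcal C(e)=\mathcal C(Z)=\mathcal C(W)$ and $\mathcal C(e),\mathcal C(X),\mathcal C(Y)$ are pairwise distinct; $\Omega_i$, $E_i$ denote regions/edges of color $i$. For $\mu=(p,q,r,s)$, a $\mu$-Markoff map is $\phi:\Omega\to\mathbb{C}$ such that (i) at every vertex with regions $X\in\Omega_1,Y\in\Omega_2,Z\in\Omega_3$, $x^2+y^2+z^2+xyz=px+qy+rz+s$ where $x=\phi(X)$, etc.; (ii) for $e\in E_1$, $e\leftrightarrow(Y,Z;X,X')$: $\phi(X)+\phi(X')=p-\phi(Y)\phi(Z)$; for $e\in E_2$, $e\leftrightarrow(X,Z;Y,Y')$: $\phi(Y)+\phi(Y')=q-\phi(X)\phi(Z)$;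 for $e\in E_3$, $e\leftrightarrow(X,Y;Z,Z')$: $\phi(Z)+\phi(Z')=r-\phi(X)\phi(Y)$. $\Phi_\mu$ is the set of such maps. *)

From Stdlib Require Import Reals ZArith List.
From Coquelicot Require Import Coquelicot.

(* Concrete model of the trivalent planar tree Sigma (dual to the Farey
   tessellation).  A complementary region is a primitive vector (a,b) of Z^2
   up to sign, normalised so that b > 0, or (a,b) = (1,0).  Two regions X,Y
   share an edge iff |det(X,Y)| = 1; that edge has endpoints lying on the
   further regions +-(X+Y) and +-(X-Y). *)

Definition zdet (u v : Z * Z) : Z := (fst u * snd v - snd u * fst v)%Z.

Definition zadd (u v : Z * Z) : Z * Z := (fst u + fst v, snd u + snd v)%Z.
Definition zsub (u v : Z * Z) : Z * Z := (fst u - fst v, snd u - snd v)%Z.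

Definition znormal (v : Z * Z) : Z * Z :=
  if orb (snd v <? 0)%Z (andb (snd v =? 0)%Z (fst v <? 0)%Z)
  then (- fst v, - snd v)%Z else v.

Definition is_region (v : Z * Z) : Prop :=
  Z.gcd (fst v) (snd v) = 1%Z /\ ((0 < snd v)%Z \/ (snd v = 0%Z /\ fst v = 1%Z)).

Definition Omega : Type := { v : Z * Z | is_region v }.

Definition rv (X : Omega) : Z * Z := proj1_sig X.

Definition adjacent (X Y : Omega) : Prop := Z.abs (zdet (rv X) (rv Y)) = 1%Z.

Definition at_vertex (X Y Z : Omega) : Prop :=
  adjacent X Y /\ (rv Z = znormal (zadd (rv X) (rv Y)) \/
                   rv Z = znormal (zsub (rv X) (rv Y))).

Definition edge_ends (X Y Z W : Omega) : Prop :=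
  adjacent X Y /\ rv Z = znormal (zadd (rv X) (rv Y)) /\
  rv W = znormal (zsub (rv X) (rv Y)).

(* The coloring C : colour of a region = its class mod 2:
   (odd,even) -> 1, (even,odd) -> 2, (odd,odd) -> 3.  This satisfies the
   rules of the coloring (edge colour = colour of its endpoint regions, which
   differs from the colours of the two regions containing it). *)
Definition color (X : Omega) : nat :=
  if Z.even (fst (rv X)) then 2%nat
  else if Z.even (snd (rv X)) then 1%nat else 3%nat.

Definition markoff_map (p q r s : C) (phi : Omega -> C) : Prop :=
  (forall X Y Z : Omega, at_vertex X Y Z ->
     color X = 1%nat -> color Y = 2%nat -> color Z = 3%nat ->
     let x := phi X in let y := phi Y in let z := phi Z in
     Cplus (Cplus (Cplus (Cmult x x) (Cmult y y)) (Cmult z z)) (Cmult (Cmult x y) z)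
     = Cplus (Cplus (Cplus (Cmult p x) (Cmult q y)) (Cmult r z)) s) /\
  (* (ii) edge relations, e <-> (X,Y; Z,W), C(e) = C(Z) = C(W) *)
  (forall X Y Z W : Omega, edge_ends X Y Z W ->
     color X = 2%nat -> color Y = 3%nat ->
     Cplus (phi Z) (phi W) = Cminus p (Cmult (phi X) (phi Y))) /\
  (forall X Y Z W : Omega, edge_ends X Y Z W ->
     color X = 1%nat -> color Y = 3%nat ->
     Cplus (phi Z) (phi W) = Cminus q (Cmult (phi X) (phi Y))) /\
  (forall X Y Z W : Omega, edge_ends X Y Z W ->
     color X = 1%nat -> color Y = 2%nat ->
     Cplus (phi Z) (phi W) = Cminus r (Cmult (phi X) (phi Y))).

Definition small_set_finite (phi : Omega -> C) (t : R) : Prop :=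
  exists l : list (Z * Z), forall X : Omega, (Cmod (phi X) <= t)%R -> In (rv X) l.

From Stdlib Require Import Reals ZArith List.
From Coquelicot Require Import Coquelicot.
From Stdlib Require Import Lia Lra ClassicalEpsilon Znumtheory.

(* Regions are the primitive vectors +-(a,b), two regions being adjacent iff |det| = 1.  Put
   phi = 0 on the region (1,0).  Along its neighbours (n,1) the edge relations force a
   4-periodic sequence A, B, q - A, r - B, and the vertex relations there reduce to the single
   equation A^2 + B^2 - qA - rB = s.  Every other region v is the sum X + Y of its two Farey
   parents, and phi(v) is defined by the edge relation at the edge between X and Y, whose other
   end lies on X - Y.  The edge relations then hold everywhere; as the edge relation equates the
   defects of the vertex equation at the two ends of an edge, the vertex equations follow from
   those at the vertices on (1,0) by descending the tree.  Finally, if A, B, q - A and r - B have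
   modulus at least 3 + |p| + |q| + |r|, then |phi| increases from parents to child, so (1,0) is
   the only region where |phi| <= 2 + alpha. *)

Local Open Scope Z_scope.

Definition zopp (v : Z * Z) : Z * Z := (- fst v, - snd v).

(* [color X] is convertible to [zcolor (rv X)]. *)
Definition zcolor (v : Z * Z) : nat :=
  if Z.even (fst v) then 2%nat else if Z.even (snd v) then 1%nat else 3%nat.

Ltac zexpand :=
  repeat match goal with U : (Z * Z)%type |- _ => destruct U end;
  unfold zopp, zadd, zsub, zdet in *; simpl in *.

Lemma zopp_involutive v : zopp (zopp v) = v.
Proof. zexpand; f_equal; ring. Qed.

Lemma zadd_comm U V : zadd U V = zadd V U.
Proof. zexpand; f_equal; ring. Qed.

Lemma zsub_anticomm U V : zsub V U = zopp (zsub U V).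
Proof. zexpand; f_equal; ring. Qed.

Lemma zsub_zopp U V : zsub (zopp U) (zopp V) = zopp (zsub U V).
Proof. zexpand; f_equal; ring. Qed.

Lemma zadd_zopp_r U V : zadd U (zopp V) = zsub U V.
Proof. zexpand; f_equal; ring. Qed.

Lemma zsub_zopp_r U V : zsub U (zopp V) = zadd U V.
Proof. zexpand; f_equal; ring. Qed.

Lemma zadd_zsub_cancel U V : zadd (zadd U V) (zopp V) = U.
Proof. zexpand; f_equal; ring. Qed.

Lemma zdet_zopp_r U V : Z.abs (zdet U (zopp V)) = Z.abs (zdet U V).
Proof. zexpand; rewrite <- Z.abs_opp; f_equal; ring. Qed.

Lemma zdet_comm U V : Z.abs (zdet V U) = Z.abs (zdet U V).
Proof. zexpand; rewrite <- Z.abs_opp; f_equal; ring. Qed.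

Lemma zdet_zadd_l U V : Z.abs (zdet (zadd U V) V) = Z.abs (zdet U V).
Proof. zexpand; f_equal; ring. Qed.

Lemma zcolor_zopp v : zcolor (zopp v) = zcolor v.
Proof. unfold zcolor, zopp; simpl; now rewrite !Z.even_opp. Qed.

Lemma zcolor_zsub U V : zcolor (zsub U V) = zcolor (zadd U V).
Proof. zexpand; unfold zcolor; simpl; now rewrite !Z.even_sub, !Z.even_add. Qed.

Lemma znormal_cases v : znormal v = v \/ znormal v = zopp v.
Proof. unfold znormal; destruct (_ || _)%bool; auto. Qed.

Lemma zcolor_znormal v : zcolor (znormal v) = zcolor v.
Proof. destruct (znormal_cases v) as [-> | ->]; auto using zcolor_zopp. Qed.

(* Two adjacent regions and their sum are the three nonzero classes of (Z/2)^2. *)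
Lemma zcolor_vertex U V :
  Z.abs (zdet U V) = 1 -> (zcolor U + zcolor V + zcolor (zadd U V) = 6)%nat.
Proof.
  intros H; assert (Hodd : Z.even (zdet U V) = false)
    by (assert (E : zdet U V = 1 \/ zdet U V = -1) by lia; destruct E as [-> | ->]; reflexivity).
  zexpand; unfold zcolor; simpl.
  rewrite Z.even_sub, !Z.even_mul in Hodd; rewrite !Z.even_add.
  repeat match goal with |- context [Z.even ?x] => is_var x; destruct (Z.even x) end;
    simpl in *; congruence.
Qed.

Lemma zcolor_third U V a b c : Z.abs (zdet U V) = 1 ->
  zcolor U = a -> zcolor V = b -> (a + b + c = 6)%nat -> zcolor (zadd U V) = c.
Proof. intros H <- <- E; pose proof (zcolor_vertex U V H); lia. Qed.

Lemma zdet_axis u1 v1 v2 : Z.abs (zdet (u1, 0) (v1, v2)) = 1 ->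
  (u1 = 1 \/ u1 = -1) /\ (v2 = 1 \/ v2 = -1).
Proof.
  unfold zdet; simpl; intros H.
  assert (H' : Z.abs u1 * Z.abs v2 = 1) by (rewrite <- Z.abs_mul; lia).
  split; [|rewrite Z.mul_comm in H']; destruct (Z.mul_eq_1 _ _ H'); lia.
Qed.

(* A region v with |snd v| >= 2 is the sum of its two parents in the Farey tree: adjacent
   regions on the same side of the axis, hence of smaller height. *)
Definition is_parents (v X Y : Z * Z) : Prop :=
  Z.abs (zdet X Y) = 1 /\ zadd X Y = v /\ 0 < snd X * snd Y.

Lemma is_parents_snd v X Y : is_parents v X Y ->
  Z.abs (snd X) < Z.abs (snd v) /\ Z.abs (snd Y) < Z.abs (snd v) /\
  Z.abs (snd (zsub X Y)) < Z.abs (snd v).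
Proof. intros [_ [<- H]]; zexpand; nia. Qed.

Lemma is_parents_zopp v X Y : is_parents v X Y -> is_parents (zopp v) (zopp X) (zopp Y).
Proof.
  intros [H [<- S]]; split; [|split]; zexpand.
  - rewrite <- H; f_equal; ring.
  - f_equal; ring.
  - nia.
Qed.

Lemma same_sign_cases x y : 0 < x * y -> (0 < x /\ 0 < y) \/ (x < 0 /\ y < 0).
Proof. intros H; destruct (Z.lt_trichotomy x 0) as [Hx | [-> | Hx]]; nia. Qed.

Lemma small_multiple k b d : d = k * b -> Z.abs d < Z.abs b -> k = 0.
Proof. intros -> Hd; rewrite Z.abs_mul in Hd; nia. Qed.

Lemma is_parents_unique v X Y X' Y' : is_parents v X Y -> is_parents v X' Y' ->
  (X' = X /\ Y' = Y) \/ (X' = Y /\ Y' = X).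
Proof.
  intros [H [<- S]] [H' [E S']].
  destruct X as [x1 x2], Y as [y1 y2], X' as [a1 a2], Y' as [b1 b2].
  unfold zdet, zadd in *; simpl in *; injection E as E1 E2.
  assert (Eb1 : b1 = x1 + y1 - a1) by lia; assert (Eb2 : b2 = x2 + y2 - a2) by lia.
  subst b1 b2.
  apply same_sign_cases in S; apply same_sign_cases in S'.
  (* Cramer: det(X,v) X' = det(X',v) X - det(X',X) v *)
  set (k := a1 * x2 - a2 * x1).
  assert (C1 : (x1 * y2 - x2 * y1) * a1 =
    (a1 * (x2 + y2 - a2) - a2 * (x1 + y1 - a1)) * x1 - k * (x1 + y1)) by (unfold k; ring).
  assert (C2 : (x1 * y2 - x2 * y1) * a2 =
    (a1 * (x2 + y2 - a2) - a2 * (x1 + y1 - a1)) * x2 - k * (x2 + y2)) by (unfold k; ring).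
  clearbody k.
  assert (Hd : x1 * y2 - x2 * y1 = 1 \/ x1 * y2 - x2 * y1 = -1) by lia.
  assert (Hd' : a1 * (x2 + y2 - a2) - a2 * (x1 + y1 - a1) = 1 \/
                a1 * (x2 + y2 - a2) - a2 * (x1 + y1 - a1) = -1) by lia.
  destruct Hd as [Hd | Hd], Hd' as [Hd' | Hd']; rewrite Hd, Hd' in C1, C2.
  - left; assert (k = 0) by (apply (small_multiple k (x2 + y2) (x2 - a2)); lia).
    subst k; split; f_equal; lia.
  - right; assert (k + 1 = 0) by (apply (small_multiple (k + 1) (x2 + y2) (y2 - a2)); lia).
    split; f_equal; lia.
  - right; assert (k - 1 = 0) by (apply (small_multiple (k - 1) (x2 + y2) (a2 - y2)); lia).
    split; f_equal; lia.
  - left; assert (k = 0) by (apply (small_multiple k (x2 + y2) (a2 - x2)); lia).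
    subst k; split; f_equal; lia.
Qed.

Lemma is_parents_exists a b : Z.gcd a b = 1 -> 2 <= b -> exists X Y, is_parents (a, b) X Y.
Proof.
  intros Hg Hb.
  assert (Hgcd : Zis_gcd a b 1) by (rewrite <- Hg; apply Zgcd_is_gcd).
  destruct (Zis_gcd_bezout _ _ _ Hgcd) as [u w Huw].
  set (x2 := (- u) mod b); set (x1 := w - (- u / b) * a).
  assert (Hx2 : - u = b * (- u / b) + x2) by (apply Z.div_mod; lia).
  assert (Hrange : 0 <= x2 < b) by (apply Z.mod_pos_bound; lia).
  assert (Hdet : x1 * b - x2 * a = 1) by (unfold x1; nia).
  assert (Hx2pos : x2 <> 0).
  { intros E; rewrite E, Z.mul_0_l, Z.sub_0_r, Z.mul_comm in Hdet.
    destruct (Z.mul_eq_1 _ _ Hdet); lia. }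
  exists (x1, x2), (a - x1, b - x2); split; [|split]; unfold zdet, zadd; simpl.
  - replace (x1 * (b - x2) - x2 * (a - x1)) with (x1 * b - x2 * a) by ring; lia.
  - f_equal; ring.
  - nia.
Qed.

Definition parents (v : Z * Z) : (Z * Z) * (Z * Z) :=
  match excluded_middle_informative (exists P, is_parents v (fst P) (snd P)) with
  | left H => proj1_sig (constructive_indefinite_description _ H)
  | right _ => ((0, 0), (0, 0))
  end.

Lemma parents_cases v :
  is_parents v (fst (parents v)) (snd (parents v)) \/
  (parents v = ((0, 0), (0, 0)) /\ forall X Y, ~ is_parents v X Y).
Proof.
  unfold parents; destruct excluded_middle_informative as [H | H].
  - left; exact (proj2_sig (constructive_indefinite_description _ H)).
  - right; split; [reflexivity|]; intros X Y HXY; apply H; now exists (X, Y).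
Qed.

Lemma parents_snd_lt v : 2 <= Z.abs (snd v) ->
  Z.abs (snd (fst (parents v))) < Z.abs (snd v) /\
  Z.abs (snd (snd (parents v))) < Z.abs (snd v) /\
  Z.abs (snd (zsub (fst (parents v)) (snd (parents v)))) < Z.abs (snd v).
Proof.
  intros Hv; destruct (parents_cases v) as [H | [-> _]].
  - exact (is_parents_snd _ _ _ H).
  - simpl; lia.
Qed.

Lemma mod4_cases n : n mod 4 = 0 \/ n mod 4 = 1 \/ n mod 4 = 2 \/ n mod 4 = 3.
Proof. pose proof (Z.mod_pos_bound n 4); lia. Qed.

Lemma even_mod4 n : Z.even (n mod 4) = Z.even n.
Proof.
  rewrite (Z.div_mod n 4) at 2 by lia.
  now rewrite Z.even_add, Z.even_mul; destruct (Z.even (n mod 4)).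
Qed.

Local Close Scope Z_scope.
Local Open Scope R_scope.

Lemma Cmod_sub3 (a b c : C) : Cmod (a - b - c)%C <= Cmod a + Cmod b + Cmod c.
Proof.
  unfold Cminus; eapply Rle_trans; [apply Cmod_triangle|].
  pose proof (Cmod_triangle a (- b)%C); rewrite Cmod_opp in *; lra.
Qed.

Lemma Cmod_growth (c x y w : C) : 1 <= Cmod x -> 2 + Cmod c <= Cmod y -> Cmod w <= Cmod x ->
  Cmod x <= Cmod (c - x * y - w)%C.
Proof.
  intros Hx Hy Hw.
  pose proof (Cmod_sub3 c (c - x * y - w)%C w) as T.
  replace (c - (c - x * y - w) - w)%C with (x * y)%C in T by ring.
  rewrite Cmod_mult in T; pose proof (Cmod_ge_0 c); nra.
Qed.

Section Extension.
Local Open Scope C_scope.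

Variables p q r A B : C.

Definition colour_const (k : nat) : C :=
  match k with 1%nat => p | 2%nat => q | _ => r end.

(* Values on the neighbours (n,1) = +-(-n,-1) of (1,0): as phi vanishes on (1,0), the edge
   relations along them read chain n + chain (n + 2) = chain_const n. *)
Definition chain (n : Z) : C :=
  match (n mod 4)%Z with 0%Z => A | 1%Z => B | 2%Z => q - A | _ => r - B end.

Definition chain_const (n : Z) : C := if Z.even n then q else r.

Definition base_value (v : Z * Z) : C :=
  if (snd v =? 0)%Z then 0 else chain (fst v * snd v).

(* For |snd v| >= 2 the edge between the parents X, Y of v has its ends on v and on X - Y, so
   the edge relation there determines phi v; [base_value v] is only used when |snd v| <= 1. *)
Fixpoint phi_fuel (n : nat) (v : Z * Z) : C :=
  match n with
  | O => base_value v
  | S n =>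
      if (2 <=? Z.abs (snd v))%Z then
        colour_const (zcolor v)
        - phi_fuel n (fst (parents v)) * phi_fuel n (snd (parents v))
        - phi_fuel n (zsub (fst (parents v)) (snd (parents v)))
      else base_value v
  end.

Definition phi (v : Z * Z) : C := phi_fuel (Z.to_nat (Z.abs (snd v))) v.

Lemma phi_fuel_irrel n m v :
  (Z.to_nat (Z.abs (snd v)) <= n)%nat -> (Z.to_nat (Z.abs (snd v)) <= m)%nat ->
  phi_fuel n v = phi_fuel m v.
Proof.
  revert m v; induction n as [|n IH]; intros [|m] v Hn Hm; simpl; try reflexivity.
  - destruct (Z.leb_spec 2 (Z.abs (snd v))); [lia | reflexivity].
  - destruct (Z.leb_spec 2 (Z.abs (snd v))); [lia | reflexivity].
  - destruct (Z.leb_spec 2 (Z.abs (snd v))) as [Hv | _]; [|reflexivity].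
    destruct (parents_snd_lt v Hv) as [H1 [H2 H3]].
    rewrite !(IH m) by lia; reflexivity.
Qed.

Lemma phi_fuel_eq n v :
  (Z.to_nat (Z.abs (snd v)) <= n)%nat -> phi_fuel n v = phi v.
Proof. intros Hn; exact (phi_fuel_irrel n _ v Hn (le_n _)). Qed.

Lemma phi_unfold v : (2 <= Z.abs (snd v))%Z ->
  phi v = colour_const (zcolor v)
          - phi (fst (parents v)) * phi (snd (parents v))
          - phi (zsub (fst (parents v)) (snd (parents v))).
Proof.
  intros Hv; destruct (parents_snd_lt v Hv) as [H1 [H2 H3]].
  unfold phi at 1; destruct (Z.to_nat (Z.abs (snd v))) as [|n] eqn:En; [lia|]; simpl.
  destruct (Z.leb_spec 2 (Z.abs (snd v))); [|lia].
  rewrite !phi_fuel_eq by lia; reflexivity.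
Qed.

Lemma phi_base v : (Z.abs (snd v) <= 1)%Z -> phi v = base_value v.
Proof.
  intros Hv; unfold phi; destruct (Z.to_nat (Z.abs (snd v))); simpl; [reflexivity|].
  destruct (Z.leb_spec 2 (Z.abs (snd v))); [lia | reflexivity].
Qed.

Lemma phi_chain a e : Z.abs e = 1%Z -> phi (a, e) = chain (a * e).
Proof.
  intros He; rewrite phi_base by (simpl; lia); unfold base_value; simpl.
  destruct (Z.eqb_spec e 0); [lia | reflexivity].
Qed.

Lemma phi_axis a : phi (a, 0%Z) = 0.
Proof. rewrite phi_base by (simpl; lia); reflexivity. Qed.

Lemma phi_zopp v : phi (zopp v) = phi v.
Proof.
  remember (Z.to_nat (Z.abs (snd v))) as n eqn:Hn; revert v Hn.
  induction n as [n IH] using lt_wf_ind; intros v Hn.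
  assert (IH' : forall w, (Z.abs (snd w) < Z.abs (snd v))%Z -> phi (zopp w) = phi w)
    by (intros w Hw; apply (IH (Z.to_nat (Z.abs (snd w)))); lia).
  destruct (Z_le_gt_dec (Z.abs (snd v)) 1) as [Hv | Hv].
  - rewrite !phi_base by (zexpand; lia).
    destruct v as [a b]; unfold base_value, zopp; simpl.
    replace (- a * - b)%Z with (a * b)%Z by ring.
    destruct (Z.eqb_spec b 0), (Z.eqb_spec (- b) 0); reflexivity || lia.
  - rewrite (phi_unfold (zopp v)), (phi_unfold v), zcolor_zopp by (zexpand; lia).
    destruct (parents_snd_lt v ltac:(lia)) as [H1 [H2 H3]].
    destruct (parents_cases v) as [Hp | [Ep Hnone]].
    + destruct (parents_cases (zopp v)) as [Hp' | [_ Hnone']];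
        [| now destruct (Hnone' _ _ (is_parents_zopp _ _ _ Hp))].
      destruct (is_parents_unique _ _ _ _ _ (is_parents_zopp _ _ _ Hp) Hp') as [[-> ->] | [-> ->]].
      * rewrite zsub_zopp, !IH' by auto; reflexivity.
      * rewrite (zsub_anticomm (zopp _)), zsub_zopp, zopp_involutive, !IH' by auto; ring.
    + destruct (parents_cases (zopp v)) as [Hp' | [Ep' _]].
      * pose proof (is_parents_zopp _ _ _ Hp') as H; rewrite zopp_involutive in H.
        now destruct (Hnone _ _ H).
      * now rewrite Ep, Ep'.
Qed.

Lemma phi_znormal v : phi (znormal v) = phi v.
Proof. destruct (znormal_cases v) as [-> | ->]; auto using phi_zopp. Qed.

Lemma chain_add2 n : chain n + chain (n + 2) = chain_const n.
Proof.
  unfold chain, chain_const; rewrite <- even_mod4, <- Z.add_mod_idemp_l by lia.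
  destruct (mod4_cases n) as [E | [E | [E | E]]]; rewrite E; simpl; ring.
Qed.

Lemma chain_pair x y : (y = x + 2 \/ x = y + 2)%Z -> chain x + chain y = chain_const x.
Proof.
  intros [-> | ->]; [apply chain_add2|].
  rewrite Cplus_comm, chain_add2; unfold chain_const.
  now rewrite Z.even_add; destruct (Z.even y).
Qed.

Lemma colour_const_chain a e : Z.abs e = 1%Z -> colour_const (zcolor (a, e)) = chain_const (a * e).
Proof.
  intros He; assert (Ee : Z.even e = false)
    by (assert (E : (e = 1 \/ e = -1)%Z) by lia; destruct E as [-> | ->]; reflexivity).
  unfold zcolor, chain_const; simpl; rewrite Z.even_mul, Ee.
  now destruct (Z.even a).
Qed.

Lemma edge_relation_axis U V : Z.abs (zdet U V) = 1%Z -> snd U = 0%Z ->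
  phi (zadd U V) + phi (zsub U V) = colour_const (zcolor (zadd U V)) - phi U * phi V.
Proof.
  destruct U as [u1 u2], V as [v1 v2]; simpl; intros H ->.
  destruct (zdet_axis _ _ _ H) as [Hu Hv]; unfold zadd, zsub; simpl.
  rewrite ?Z.add_0_l, ?Z.sub_0_l, phi_axis, !phi_chain, colour_const_chain by lia.
  rewrite chain_pair; [ring|].
  destruct Hu, Hv; subst; lia.
Qed.

Lemma edge_relation_same_sign U V : Z.abs (zdet U V) = 1%Z -> (0 < snd U * snd V)%Z ->
  phi (zadd U V) + phi (zsub U V) = colour_const (zcolor (zadd U V)) - phi U * phi V.
Proof.
  intros H S; assert (HUV : is_parents (zadd U V) U V) by now split.
  rewrite phi_unfold by (zexpand; nia).
  destruct (parents_cases (zadd U V)) as [Hp | [_ Hnone]]; [| now destruct (Hnone U V)].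
  destruct (is_parents_unique _ _ _ _ _ HUV Hp) as [[-> ->] | [-> ->]].
  - ring.
  - rewrite zsub_anticomm, phi_zopp; ring.
Qed.

Lemma edge_relation U V : Z.abs (zdet U V) = 1%Z ->
  phi (zadd U V) + phi (zsub U V) = colour_const (zcolor (zadd U V)) - phi U * phi V.
Proof.
  intros H.
  destruct (Z.eq_dec (snd U) 0) as [HU | HU]; [now apply edge_relation_axis|].
  destruct (Z.eq_dec (snd V) 0) as [HV | HV].
  { rewrite zadd_comm, (zsub_anticomm V U), phi_zopp, Cmult_comm.
    apply edge_relation_axis; auto; now rewrite zdet_comm. }
  destruct (Z_lt_le_dec 0 (snd U * snd V)) as [S | S]; [now apply edge_relation_same_sign|].
  pose proof (edge_relation_same_sign U (zopp V)) as E.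
  rewrite zadd_zopp_r, zsub_zopp_r, phi_zopp, zcolor_zsub, zdet_zopp_r in E.
  rewrite Cplus_comm, E by (auto; zexpand; nia); ring.
Qed.

Variable s : C.
Hypothesis seed_vertex : A * A + B * B - q * A - r * B = s.

Lemma chain_vertex x y : (y = x + 1 \/ x = y + 1)%Z ->
  chain x * chain x + chain y * chain y
  - chain_const x * chain x - chain_const y * chain y = s.
Proof.
  assert (Hn : forall n, chain n * chain n + chain (n + 1) * chain (n + 1)
    - chain_const n * chain n - chain_const (n + 1) * chain (n + 1) = s).
  { intros n; unfold chain, chain_const.
    rewrite <- (even_mod4 n), <- (even_mod4 (n + 1)), <- (Z.add_mod_idemp_l n) by lia.
    destruct (mod4_cases n) as [E | [E | [E | E]]]; rewrite E; simpl; rewrite <- seed_vertex; ring. }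
  intros [-> | ->]; [apply Hn | rewrite <- (Hn y); ring].
Qed.

Definition residual (U V W : Z * Z) : C :=
  phi U * phi U + phi V * phi V + phi W * phi W + phi U * phi V * phi W
  - colour_const (zcolor U) * phi U - colour_const (zcolor V) * phi V
  - colour_const (zcolor W) * phi W - s.

Definition vertex_height (U V : Z * Z) : nat :=
  Z.to_nat (Z.abs (snd U) + Z.abs (snd V) + Z.abs (snd (zadd U V))).

Lemma residual_znormal U V W : residual U V (znormal W) = residual U V W.
Proof. unfold residual; now rewrite phi_znormal, zcolor_znormal. Qed.

Lemma residual_comm U V : residual U V (zadd U V) = residual V U (zadd V U).
Proof. rewrite zadd_comm; unfold residual; ring. Qed.

Lemma residual_flip U V : Z.abs (zdet U V) = 1%Z ->
  residual U V (zadd U V) = residual U V (zsub U V).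
Proof.
  intros H; pose proof (edge_relation U V H) as E.
  assert (Eadd : phi (zadd U V) =
    colour_const (zcolor (zadd U V)) - phi U * phi V - phi (zsub U V))
    by (rewrite <- E; ring).
  unfold residual; rewrite Eadd, zcolor_zsub; ring.
Qed.

Lemma residual_flip_zopp U V : Z.abs (zdet U V) = 1%Z ->
  residual U V (zadd U V) = residual U (zopp V) (zadd U (zopp V)).
Proof.
  intros H; rewrite residual_flip, zadd_zopp_r by auto.
  unfold residual; now rewrite phi_zopp, zcolor_zopp.
Qed.

Lemma residual_shift U V :
  residual U V (zadd U V) = residual (zadd U V) (zopp V) (zadd (zadd U V) (zopp V)).
Proof. rewrite zadd_zsub_cancel; unfold residual; rewrite phi_zopp, zcolor_zopp; ring. Qed.

Lemma residual_axis U V : Z.abs (zdet U V) = 1%Z -> snd U = 0%Z ->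
  residual U V (zadd U V) = 0.
Proof.
  destruct U as [u1 u2], V as [v1 v2]; simpl; intros H ->.
  destruct (zdet_axis _ _ _ H) as [Hu Hv]; unfold residual, zadd; simpl.
  rewrite ?Z.add_0_l, phi_axis, !phi_chain by lia.
  rewrite (colour_const_chain v1), (colour_const_chain (u1 + v1)) by lia.
  rewrite <- (chain_vertex (v1 * v2) ((u1 + v1) * v2)); [ring|].
  destruct Hu, Hv; subst; lia.
Qed.

Definition descends (U V : Z * Z) : Prop :=
  exists U' V', Z.abs (zdet U' V') = 1%Z /\
    (vertex_height U' V' < vertex_height U V)%nat /\
    residual U' V' (zadd U' V') = residual U V (zadd U V).

Lemma descends_comm U V : descends V U -> descends U V.
Proof.
  intros [U' [V' [H' [Lt E]]]]; exists U', V'; rewrite E, <- residual_comm.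
  split; [|split]; auto; unfold vertex_height in *; rewrite (zadd_comm U V); lia.
Qed.

Lemma descends_ordered U V : Z.abs (zdet U V) = 1%Z -> snd V <> 0%Z ->
  snd (zadd U V) <> 0%Z -> (Z.abs (snd V) <= Z.abs (snd U))%Z -> descends U V.
Proof.
  intros H HV HUV L; destruct (Z_lt_le_dec 0 (snd U * snd V)) as [S | S].
  - exists U, (zopp V); split; [|split].
    + now rewrite zdet_zopp_r.
    + unfold vertex_height; zexpand; nia.
    + symmetry; now apply residual_flip_zopp.
  - exists (zadd U V), V; split; [|split].
    + now rewrite zdet_zadd_l.
    + unfold vertex_height; zexpand; nia.
    + rewrite (residual_shift U V), residual_flip_zopp; [reflexivity|].
      now rewrite zdet_zadd_l.
Qed.

Lemma descends_nonaxial U V : Z.abs (zdet U V) = 1%Z ->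
  snd U <> 0%Z -> snd V <> 0%Z -> snd (zadd U V) <> 0%Z -> descends U V.
Proof.
  intros H HU HV HUV; destruct (Z_le_gt_dec (Z.abs (snd V)) (Z.abs (snd U))) as [L | L].
  - now apply descends_ordered.
  - apply descends_comm, descends_ordered; [now rewrite zdet_comm | auto | now rewrite zadd_comm | lia].
Qed.

Lemma residual_vertex_zero U V : Z.abs (zdet U V) = 1%Z -> residual U V (zadd U V) = 0.
Proof.
  remember (vertex_height U V) as n eqn:Hn; revert U V Hn.
  induction n as [n IH] using lt_wf_ind; intros U V Hn H.
  destruct (Z.eq_dec (snd U) 0) as [HU | HU]; [now apply residual_axis|].
  destruct (Z.eq_dec (snd V) 0) as [HV | HV].
  { rewrite residual_comm; apply residual_axis; auto; now rewrite zdet_comm. }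
  destruct (Z.eq_dec (snd (zadd U V)) 0) as [HUV | HUV].
  { rewrite residual_shift; apply residual_axis; auto; now rewrite zdet_zopp_r, zdet_zadd_l. }
  destruct (descends_nonaxial U V H HU HV HUV) as [U' [V' [H' [Lt <-]]]].
  now apply (IH (vertex_height U' V')); [lia | |].
Qed.

Lemma residual_vertex U V W : Z.abs (zdet U V) = 1%Z ->
  W = znormal (zadd U V) \/ W = znormal (zsub U V) -> residual U V W = 0.
Proof.
  intros H [-> | ->]; rewrite residual_znormal; [|rewrite <- residual_flip by auto];
    now apply residual_vertex_zero.
Qed.

Variable M : R.
Hypothesis colour_const_small : forall k, (2 + Cmod (colour_const k) <= M)%R.
Hypothesis chain_large : forall n, (M <= Cmod (chain n))%R.

Definition grows (U V : Z * Z) : Prop :=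
  (M <= Cmod (phi U) /\ M <= Cmod (phi V) /\
   Cmod (phi U) <= Cmod (phi (zadd U V)) /\ Cmod (phi V) <= Cmod (phi (zadd U V)))%R.

Definition same_sign_adjacent (U V : Z * Z) : Prop :=
  Z.abs (zdet U V) = 1%Z /\ (0 < snd U * snd V)%Z.

Lemma grows_ordered U V : same_sign_adjacent U V -> (Z.abs (snd V) <= Z.abs (snd U))%Z ->
  (forall U' V', same_sign_adjacent U' V' ->
     (Z.abs (snd (zadd U' V')) < Z.abs (snd (zadd U V)))%Z -> grows U' V') ->
  grows U V.
Proof.
  intros [H S] L IH; unfold grows.
  assert (HM : (2 <= M)%R)
    by (pose proof (colour_const_small 0) as H0; simpl in H0; pose proof (Cmod_ge_0 r); lra).
  assert (Eadd : phi (zadd U V) =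
    colour_const (zcolor (zadd U V)) - phi U * phi V - phi (zsub U V))
    by (rewrite <- (edge_relation U V H); ring).
  pose proof (colour_const_small (zcolor (zadd U V))) as Hc.
  destruct (Z.eq_dec (snd U) (snd V)) as [E | E].
  - (* U, V are neighbours of (1,0) and U - V lies on the axis, where phi vanishes. *)
    destruct U as [u1 u2], V as [v1 v2]; unfold zdet, zsub in *; simpl in *; subst v2.
    replace (u1 * u2 - u2 * v1)%Z with (u2 * (u1 - v1))%Z in H by ring.
    rewrite Z.abs_mul in H.
    assert (Hu : Z.abs u2 = 1%Z) by (destruct (Z.mul_eq_1 _ _ H); lia).
    rewrite Z.sub_diag, phi_axis in Eadd.
    assert (HU : (M <= Cmod (phi (u1, u2)))%R) by (rewrite phi_chain; auto).
    assert (HV : (M <= Cmod (phi (v1, u2)))%R) by (rewrite phi_chain; auto).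
    rewrite Eadd; repeat split; auto.
    + apply Cmod_growth; rewrite ?Cmod_0; lra.
    + rewrite (Cmult_comm (phi (u1, u2))); apply Cmod_growth; rewrite ?Cmod_0; lra.
  - set (W := zsub U V) in *.
    assert (EU : zadd V W = U) by (unfold W; zexpand; f_equal; ring).
    destruct (IH V W) as [HV [HW [HVU HWU]]]; rewrite ?EU in *.
    + split; unfold W; zexpand; [|nia].
      rewrite <- H; rewrite <- Z.abs_opp; f_equal; ring.
    + unfold W; zexpand; nia.
    + assert (HU : (M <= Cmod (phi U))%R) by lra.
      assert (Grow : (Cmod (phi U) <= Cmod (phi (zadd U V)))%R).
      { rewrite Eadd; apply Cmod_growth; lra. }
      repeat split; lra.
Qed.

Lemma grows_same_sign_adjacent U V : same_sign_adjacent U V -> grows U V.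
Proof.
  remember (Z.to_nat (Z.abs (snd (zadd U V)))) as n eqn:Hn; revert U V Hn.
  induction n as [n IH] using lt_wf_ind; intros U V Hn HUV.
  assert (IH' : forall U' V', same_sign_adjacent U' V' ->
    (Z.abs (snd (zadd U' V')) < Z.abs (snd (zadd U V)))%Z -> grows U' V')
    by (intros U' V' H' L; apply (IH (Z.to_nat (Z.abs (snd (zadd U' V'))))); auto; lia).
  destruct (Z_le_gt_dec (Z.abs (snd V)) (Z.abs (snd U))) as [L | L].
  - now apply grows_ordered.
  - destruct HUV as [H S].
    destruct (grows_ordered V U) as [HV [HU [HVU HUU]]].
    + split; [now rewrite zdet_comm | lia].
    + lia.
    + now rewrite zadd_comm.
    + rewrite zadd_comm in *; repeat split; auto.
Qed.

Lemma phi_region_large a b : Z.gcd a b = 1%Z -> (0 < b)%Z -> (M <= Cmod (phi (a, b)))%R.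
Proof.
  intros Hg Hb; destruct (Z.eq_dec b 1) as [-> | Hb1].
  - rewrite phi_chain by reflexivity; apply chain_large.
  - destruct (is_parents_exists a b Hg ltac:(lia)) as [X [Y [H [E S]]]].
    destruct (grows_same_sign_adjacent X Y (conj H S)) as [HX [_ [HXY _]]].
    rewrite <- E; lra.
Qed.

End Extension.

Lemma Cmod_ge_Im (z : C) : Rabs (snd z) <= Cmod z.
Proof. eapply Rle_trans; [apply Rmax_r | apply Rmax_Cmod]. Qed.

(* A = q/2 + a and B = r/2 + i b with a^2 - b^2 = s + q^2/4 + r^2/4, i.e.
   (a + b)(a - b) = S with a + b = T large and a - b = S/T small. *)
Lemma chain_seed_exists (q r s M : R) : 0 <= M ->
  exists A B : C, (A * A + B * B - q * A - r * B = s)%C /\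
    forall n, M <= Cmod (chain q r A B n).
Proof.
  intros HM.
  set (S := s + q * q / 4 + r * r / 4); set (T := 2 * M + Rabs q + Rabs S + 1).
  assert (HT : 0 < T) by (unfold T; pose proof (Rabs_pos q); pose proof (Rabs_pos S); lra).
  assert (HST : Rabs (S / T) <= 1).
  { unfold Rdiv; rewrite Rabs_mult, Rabs_inv, (Rabs_right T) by lra.
    apply (Rmult_le_reg_r T); [lra|].
    rewrite Rmult_assoc, Rinv_l, Rmult_1_r, Rmult_1_l by lra.
    unfold T; pose proof (Rabs_pos q); lra. }
  apply Rabs_le_between in HST.
  pose proof (proj1 (Rabs_le_between q (Rabs q)) (Rle_refl _)) as Hq.
  set (a := (T + S / T) / 2); set (b := (T - S / T) / 2).
  exists (q / 2 + a)%R, (r / 2, b); split.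
  - apply injective_projections; simpl; unfold a, b, S; field; now apply Rgt_not_eq.
  - assert (ET : T = 2 * M + Rabs q + Rabs S + 1) by reflexivity.
    assert (Ha : M + Rabs q / 2 <= a) by (unfold a; pose proof (Rabs_pos S); lra).
    assert (Hb : M <= b) by (unfold b; pose proof (Rabs_pos q); pose proof (Rabs_pos S); lra).
    intros n; unfold chain; destruct (mod4_cases n) as [E | [E | [E | E]]]; rewrite E.
    + rewrite Cmod_R; eapply Rle_trans; [|apply RRle_abs]; lra.
    + eapply Rle_trans; [|apply Cmod_ge_Im]; simpl; eapply Rle_trans; [|apply RRle_abs]; lra.
    + rewrite <- RtoC_minus, Cmod_R, <- Rabs_Ropp; eapply Rle_trans; [|apply RRle_abs]; lra.
    + eapply Rle_trans; [|apply Cmod_ge_Im]; simpl.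
      rewrite <- Rabs_Ropp; eapply Rle_trans; [|apply RRle_abs]; lra.
Qed.

Lemma colour_const_bound (p q r : R) k :
  2 + Cmod (colour_const p q r k) <= 3 + (Rabs p + Rabs q + Rabs r).
Proof.
  pose proof (Rabs_pos p); pose proof (Rabs_pos q); pose proof (Rabs_pos r).
  destruct k as [|[|[|k]]]; simpl; rewrite Cmod_R; lra.
Qed.

Lemma phi_markoff_map (p q r s A B : C) : (A * A + B * B - q * A - r * B = s)%C ->
  markoff_map p q r s (fun X => phi p q r A B (rv X)).
Proof.
  intros Hseed; split; [|split; [|split]].
  - intros X Y Z [H HZ] c1 c2 c3; cbv zeta.
    pose proof (residual_vertex p q r A B s Hseed _ _ _ H HZ) as R0; unfold residual in R0.
    change (color X) with (zcolor (rv X)) in c1; change (color Y) with (zcolor (rv Y)) in c2;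
      change (color Z) with (zcolor (rv Z)) in c3; rewrite c1, c2, c3 in R0; simpl in R0.
    apply Ceq_minus; rewrite <- R0; ring.
  - intros X Y Z W [H [-> ->]] c2 c3; rewrite !phi_znormal, edge_relation by auto.
    now rewrite (zcolor_third _ _ 2 3 1 H c2 c3).
  - intros X Y Z W [H [-> ->]] c1 c3; rewrite !phi_znormal, edge_relation by auto.
    now rewrite (zcolor_third _ _ 1 3 2 H c1 c3).
  - intros X Y Z W [H [-> ->]] c1 c2; rewrite !phi_znormal, edge_relation by auto.
    now rewrite (zcolor_third _ _ 1 2 3 H c1 c2).
Qed.

Lemma phi_small_set_finite (p q r A B : C) (M t : R) :
  (forall k, 2 + Cmod (colour_const p q r k) <= M) ->
  (forall n, M <= Cmod (chain q r A B n)) -> t < M ->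
  small_set_finite (fun X => phi p q r A B (rv X)) t.
Proof.
  intros Hc Hchain Ht; exists ((1, 0)%Z :: nil); intros [[a b] [Hg Hb]] HX.
  unfold rv in *; simpl in *; destruct Hb as [Hb | [-> ->]]; [exfalso | now left].
  pose proof (phi_region_large p q r A B M Hc Hchain a b Hg Hb); lra.
Qed.

Theorem lemma5p2 (p q r s : R) :
  ~ (p = 0%R /\ q = 0%R /\ r = 0%R) ->
  let alpha := (Rmax (Rabs p) (Rmax (Rabs q) (Rabs r)) / 2)%R in
  exists phi : Omega -> C,
    markoff_map (RtoC p) (RtoC q) (RtoC r) (RtoC s) phi /\
    small_set_finite phi (2 + alpha)%R.
Proof.
  intros _ alpha.
  pose proof (Rabs_pos p); pose proof (Rabs_pos q); pose proof (Rabs_pos r).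
  set (M := 3 + (Rabs p + Rabs q + Rabs r)).
  destruct (chain_seed_exists q r s M ltac:(unfold M; lra)) as [A [B [Hseed Hchain]]].
  exists (fun X => phi p q r A B (rv X)); split.
  - now apply phi_markoff_map.
  - apply (phi_small_set_finite _ _ _ _ _ M); [apply colour_const_bound | exact Hchain |].
    assert (Halpha : alpha <= (Rabs p + Rabs q + Rabs r) / 2).
    { apply Rmult_le_compat_r; [lra|].
      apply Rmax_lub; [lra|]; apply Rmax_lub; lra. }
    unfold M; lra.
Qed.
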